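(* Let $B_n=F(0,1,2,\ldots,n-1)$. For all $0\le k\le n$, $$\mathbf{cf}_{n,k}(p,q)=\mathbf{fT}_{n-k}(B_n,p,q)\qquad\text{and}\qquad \mathbf{Sf}_{n,k}(p,q)=\mathbf{rT}_{n-k}(B_n,p,q).$$
   Context: For $m\ge 1$, a Fibonacci tiling of height $m$ is a tiling of a column of height $m$ by tiles of height 1 and 2 whose bottom-most tile has height 1; $F_m(p,q)=\sum_T q^{\mathrm{one}(T)}p^{\mathrm{two}(T)}$ over such tilings, where $\mathrm{one}(T),\mathrm{two}(T)$ count tiles of height 1, 2 (so $F_1=q$, $F_2=q^2$, $F_m=qF_{m-1}+pF_{m-2}$); there are no tilings of height 0 and $F_0(p,q)=0$. Let $(x)_{\downarrow_{F,p,q,0}}=(x)_{\uparrow_{F,p,q,0}}=1$ and for $k\ge1$, $(x)_{\downarrow_{F,p,q,k}}=x(x-F_1(p,q))\cdots(x-F_{k-1}(p,q))$, $(x)_{\uparrow_{F,p,q,k}}=x(x+F_1(p,q))\cdots(x+F_{k-1}(p,q))$. Define $\mathbf{Sf}_{n,k}(p,q)$ and $\mathbf{cf}_{n,k}(p,q)$ ($0\le k\le n$) by $x^n=\sum_{k=0}^n\mathbf{Sf}_{n,k}(p,q)(x)_{\downarrow_{F,p,q,k}}$ and $(x)_{\uparrow_{F,p,q,n}}=\sum_{k=0}^n\mathbf{cf}_{n,k}(p,q)x^k$. A Ferrers board $F(b_1,\ldots,b_n)$ has column heights $b_1,\ldots,b_n$ from left to right. A Fibonacci file placement of $k$ tilings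 in it is a choice of columns $i_1<\cdots<i_k$ with a Fibonacci tiling of height $b_{i_j}$ in column $i_j$; a Fibonacci rook placement of $k$ tilings is a choice of columns $i_1<\cdots<i_k$ with a Fibonacci tiling of height $b_{i_s-(s-1)}$ in column $i_s$ for each $s$. The weight of a placement is $q^ap^b$ with $a,b$ the total numbers of tiles of height 1, 2. $\mathbf{fT}_k(B,p,q)$ and $\mathbf{rT}_k(B,p,q)$ are the sums of the weights of all file, respectively rook, placements of $k$ tilings (the empty placement has weight 1). *)

From HB Require Import structures.
From mathcomp Require Import all_boot all_order all_algebra.
Set Implicit Arguments. Unset Strict Implicit. Unset Printing Implicit Defensive.
Import Order.TTheory GRing.Theory Num.Theory.
Local Open Scope ring_scope.

(* A column tiling is a sequence of tile heights listed from the bottom. *)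

Fixpoint all_seqs (m : nat) : seq (seq nat) :=
  match m with
  | 0 => [:: [::]]
  | m'.+1 => [:: [::]] ++ [seq x :: s | x <- [:: 1%N; 2%N], s <- all_seqs m']
  end.

Definition is_fib_tiling (m : nat) (s : seq nat) : bool :=
  [&& head 0%N s == 1%N, all (fun x => (x == 1%N) || (x == 2%N)) s & sumn s == m].

Definition fib_tilings (m : nat) : seq (seq nat) :=
  [seq s <- all_seqs m | is_fib_tiling m s].

Definition n_one (s : seq nat) : nat := count (pred1 1%N) s.
Definition n_two (s : seq nat) : nat := count (pred1 2%N) s.

Definition Fib {R : comRingType} (p q : R) (m : nat) : R :=
  \sum_(s <- fib_tilings m) q ^+ n_one s * p ^+ n_two s.

Definition ffall {R : comRingType} (p q : R) (k : nat) : {poly R} :=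
  if k is 0 then 1 else 'X * \prod_(1 <= i < k) ('X - (Fib p q i)%:P).
Definition frise {R : comRingType} (p q : R) (k : nat) : {poly R} :=
  if k is 0 then 1 else 'X * \prod_(1 <= i < k) ('X + (Fib p q i)%:P).

Definition cf {R : comRingType} (p q : R) (n k : nat) : R := (frise p q n)`_k.

Fixpoint cprod {T : Type} (ls : seq (seq T)) : seq (seq T) :=
  match ls with
  | [::] => [:: [::]]
  | l :: ls' => [seq x :: r | x <- l, r <- cprod ls']
  end.

Definition pl_weight {R : comRingType} (p q : R) (pl : seq (seq nat)) : R :=
  q ^+ sumn (map n_one pl) * p ^+ sumn (map n_two pl).

(* A Ferrers board F(b_1,...,b_n) is given by the list b of column heights;
   column i (1-indexed) is the ordinal i-1 : 'I_(size b), of height nth 0 b (i-1). *)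

Definition cols {n : nat} (S : {set 'I_n}) : seq nat := sort leq (map val (enum S)).

Definition fT {R : comRingType} (p q : R) (b : seq nat) (k : nat) : R :=
  \sum_(S : {set 'I_(size b)} | #|S| == k)
    \sum_(pl <- cprod [seq fib_tilings (nth 0%N b c) | c <- cols S]) pl_weight p q pl.

(* rT_k(B,p,q): the s-th chosen column i_s carries a tiling of height
   b_{i_s-(s-1)}.  With 0-indexed column c = i_s - 1 and j = s - 1 this is
   nth 0 b (c - j). *)
Definition rT {R : comRingType} (p q : R) (b : seq nat) (k : nat) : R :=
  \sum_(S : {set 'I_(size b)} | #|S| == k)
    \sum_(pl <- cprod [seq fib_tilings (nth 0%N b (jc.2 - jc.1))
                        | jc <- zip (iota 0 (size (cols S))) (cols S)])
      pl_weight p q pl.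

Definition Bn (n : nat) : seq nat := iota 0 n.

From HB Require Import structures.
From mathcomp Require Import all_boot all_order all_algebra zify.
Import GRing.Theory.
Local Open Scope ring_scope.

(* Both identities are read off from sums over the column sets [S] of the
   staircase board, organised by whether the last column belongs to [S].
   Expanding [prod_(i < n) (x + F_i)] over subsets gives the file numbers
   directly.  For the rook numbers, [x * (x)_k = (x)_(k+1) + F_k (x)_k]
   shows that [x^N = sum_k r_(N-k) (x)_k] where the [r_m] obey the recursion
   [r_m(N+1) = r_m(N) + F_(N-m+1) r_(m-1)(N)] of rook placements in which
   the last column holds the [m]-th tiling; the coefficients are unique
   because [(x)_k] is monic of degree [k]. *)

Lemma enum_setE (T : finType) (A : {set T}) : enum A = [seq x <- enum T | x \in A].
Proof. by rewrite enumT /enum_mem. Qed.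

Lemma colsE N (S : {set 'I_N}) : cols S = map val (enum S).
Proof.
have sorted_S : sorted leq (map val (enum S)).
  rewrite enum_setE; apply: (subseq_sorted leq_trans _ (iota_sorted 0 N)).
  by rewrite -val_enum_ord map_subseq // filter_subseq.
by rewrite /cols sorted_sort //; exact: leq_trans.
Qed.

Lemma size_cols N (S : {set 'I_N}) : size (cols S) = #|S|.
Proof. by rewrite /cols size_sort size_map cardE. Qed.

Lemma size_cols_le N (S : {set 'I_N}) : (size (cols S) <= N)%N.
Proof. by rewrite size_cols; apply: leq_trans (max_card _) _; rewrite card_ord. Qed.

Lemma cols_ordS N (S : {set 'I_N.+1}) :
  cols S = cols [set j | lift ord_max j \in S] ++
           (if ord_max \in S then [:: N] else [::]).
Proof.
rewrite !colsE !enum_setE enum_ordSr filter_rcons filter_map.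
have -> : [seq x <- enum 'I_N | x \in [set j | lift ord_max j \in S]] =
          [seq x <- enum 'I_N | preim (widen_ord (leqnSn N)) (mem S) x].
  apply: eq_filter => x; rewrite inE; congr (_ \in S).
  by apply: val_inj; apply: lift_max.
by case: ifP => _; rewrite ?map_rcons -map_comp ?cats0 ?cats1.
Qed.

Definition set_ordS {N} (Ab : {set 'I_N} * bool) : {set 'I_N.+1} :=
  [set i | if unlift ord_max i is Some j then j \in Ab.1 else Ab.2].

Definition split_set_ordS {N} (S : {set 'I_N.+1}) : {set 'I_N} * bool :=
  ([set j | lift ord_max j \in S], ord_max \in S).

Lemma set_ordSK N : cancel (@set_ordS N) (@split_set_ordS N).
Proof.
case=> A b; rewrite /split_set_ordS /set_ordS; congr (_, _).
  by apply/setP => j; rewrite !inE liftK.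
by rewrite inE unlift_none.
Qed.

Lemma split_set_ordSK N : cancel (@split_set_ordS N) (@set_ordS N).
Proof.
move=> S; apply/setP => i; rewrite /split_set_ordS /set_ordS inE.
by case: unliftP => [j ->|->] /=; rewrite ?inE.
Qed.

Lemma cols_set_ordS N (A : {set 'I_N}) (b : bool) :
  cols (set_ordS (A, b)) = cols A ++ (if b then [:: N] else [::]).
Proof.
by rewrite cols_ordS; have := @set_ordSK N (A, b); rewrite /split_set_ordS => -[-> ->].
Qed.

Section SubsetSums.
Variable R : comRingType.

Definition subsets_sum N (f : seq nat -> R) := \sum_(S : {set 'I_N}) f (cols S).

Lemma subsets_sum0 (f : seq nat -> R) : subsets_sum 0 f = f [::].
Proof.
rewrite /subsets_sum (big_pred1 set0) ?colsE ?enum_set0 // => S.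
by apply/esym/eqP/setP => -[].
Qed.

Lemma subsets_sumS N (f : seq nat -> R) :
  subsets_sum N.+1 f = subsets_sum N f + subsets_sum N (fun s => f (rcons s N)).
Proof.
rewrite /subsets_sum (reindex (@set_ordS N)); last first.
  by apply: onW_bij; exists split_set_ordS; [exact: set_ordSK | exact: split_set_ordSK].
rewrite -(pair_big xpredT xpredT (fun A b => f (cols (set_ordS (A, b))))) /=.
rewrite -big_split /=; apply: eq_bigr => A _.
by rewrite big_bool /= addrC !cols_set_ordS cats0 cats1.
Qed.

End SubsetSums.

Arguments subsets_sum {R} N f.

Section FileExpansion.
Variables (R : comRingType) (g : nat -> R).

Lemma prod_XaddC_subsets N :
  \prod_(i < N) ('X + (g i)%:P) =
  subsets_sum N (fun s => (\prod_(c <- s) g c)%:P * 'X^(N - size s)%N).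
Proof.
elim: N => [|N IH]; first by rewrite subsets_sum0 big_ord0 big_nil mul1r.
rewrite subsets_sumS big_ord_recr /= IH mulrDr /subsets_sum !mulr_suml.
congr (_ + _); apply: eq_bigr => S _.
  by rewrite subSn ?size_cols_le // exprS -mulrA [_ * 'X]mulrC.
by rewrite big_rcons size_rcons subSS polyCM -!mulrA [_%:P * 'X^_]mulrC.
Qed.

Lemma coef_prod_XaddC N k : (k <= N)%N ->
  (\prod_(i < N) ('X + (g i)%:P))`_k =
  subsets_sum N (fun s => (size s == (N - k)%N)%:R * \prod_(c <- s) g c).
Proof.
move=> kN; rewrite prod_XaddC_subsets coef_sum; apply: eq_bigr => S _.
rewrite coefCM coefXn mulrC; congr (_%:R * _).
by have := @size_cols_le N S; move: (size _) => m mN; apply/eqP/eqP; lia.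
Qed.

End FileExpansion.

Section FallingExpansion.
Variables (R : comRingType) (a : nat -> R).

Definition fall k : {poly R} := \prod_(i < k) ('X - (a i)%:P).

Lemma fallS k : fall k.+1 = fall k * ('X - (a k)%:P).
Proof. by rewrite /fall big_ord_recr. Qed.

Lemma fall_monic k : fall k \is monic.
Proof. exact: monic_prod_XsubC. Qed.

Lemma size_fall k : size (fall k) = k.+1.
Proof.
elim: k => [|k IH]; first by rewrite /fall big_ord0 size_poly1.
rewrite fallS size_Mmonic ?monic_neq0 ?fall_monic ?monicXsubC //.
by rewrite size_XsubC IH addn2.
Qed.

Lemma coef_fall k : (fall k)`_k = 1.
Proof. by have /monicP := fall_monic k; rewrite lead_coefE size_fall. Qed.

Lemma fall_coords_eq0 m (e : nat -> R) :
  \sum_(k < m) (e k)%:P * fall k = 0 -> forall k, (k < m)%N -> e k = 0.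
Proof.
elim: m => [|m IH] // sum_eq0; move: sum_eq0; rewrite big_ord_recr /= => sum_eq0.
have em : e m = 0.
  have := congr1 (fun P : {poly R} => P`_m) sum_eq0.
  rewrite coef0 coefD coefCM coef_fall mulr1 coef_sum big1 ?add0r // => i _.
  by rewrite coefCM nth_default ?mulr0 // size_fall.
move: sum_eq0; rewrite em polyC0 mul0r addr0 => /IH e_eq0 k.
by rewrite ltnS leq_eqVlt => /predU1P [-> | /e_eq0].
Qed.

Definition rook_weight (s : seq nat) : R :=
  \prod_(jc <- zip (iota 0 (size s)) s) a (jc.2 - jc.1)%N.

Lemma rook_weight_rcons s c :
  rook_weight (rcons s c) = rook_weight s * a (c - size s)%N.
Proof.
rewrite /rook_weight size_rcons -addn1 iotaD add0n cats1 zip_rcons ?size_iota //.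
by rewrite big_rcons.
Qed.

Definition rook_number N m := subsets_sum N (fun s => (size s == m)%:R * rook_weight s).

Lemma rook_number_gt N m : (N < m)%N -> rook_number N m = 0.
Proof.
move=> Nm; rewrite /rook_number /subsets_sum big1 // => S _.
have := @size_cols_le N S; case: eqP => [->|]; last by rewrite mul0r.
by rewrite leqNgt Nm.
Qed.

Lemma rook_numberS N m : rook_number N.+1 m = rook_number N m +
  (if m is m'.+1 then a (N - m')%N * rook_number N m' else 0).
Proof.
rewrite /rook_number subsets_sumS; congr (_ + _); case: m => [|m].
  by rewrite /subsets_sum big1 // => S _; rewrite size_rcons mul0r.
rewrite /subsets_sum mulr_sumr; apply: eq_bigr => S _.
rewrite size_rcons eqSS rook_weight_rcons.
by case: eqP => [->|]; rewrite ?mul0r ?mulr0 // !mul1r mulrC.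
Qed.

Lemma Xn_fall_expansion N :
  'X^N = \sum_(k < N.+1) (rook_number N (N - k)%N)%:P * fall k.
Proof.
elim: N => [|N IH].
  rewrite big_ord1 /rook_number subsets_sum0 /fall big_ord0 mulr1.
  by rewrite /rook_weight /= big_nil mulr1.
have X_fall k : fall k * 'X = fall k.+1 + (a k)%:P * fall k.
  by rewrite fallS mulrBr [_%:P * _]mulrC subrK.
rewrite exprS mulrC IH mulr_suml.
under eq_bigr => k _ do rewrite -mulrA X_fall mulrDr.
under [in RHS]eq_bigr => k _ do rewrite rook_numberS polyCD mulrDl.
rewrite !big_split /=; congr (_ + _).
  rewrite [in RHS]big_ord_recl [rook_number _ (N.+1 - _)%N]rook_number_gt ?subn0 //.
  rewrite polyC0 mul0r add0r.
  by apply: eq_bigr => k _; rewrite lift0 subSS.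
rewrite [in RHS]big_ord_recr /= subnn polyC0 mul0r addr0.
apply: eq_bigr => k _; have kN : (k <= N)%N by rewrite -ltnS ltn_ord.
by rewrite subSn // subKn // polyCM mulrA [(rook_number _ _)%:P * _]mulrC.
Qed.

Lemma Xn_fall_coordsP N (c : nat -> R) :
  'X^N = \sum_(k < N.+1) (c k)%:P * fall k <->
  (forall k, (k <= N)%N -> c k = rook_number N (N - k)%N).
Proof.
split=> [Xn_c k kN | c_rook]; last first.
  by rewrite Xn_fall_expansion; apply: eq_bigr => k _; rewrite c_rook // -ltnS.
apply/eqP; rewrite -subr_eq0; apply/eqP; move: k kN.
apply: (@fall_coords_eq0 N.+1 (fun k => c k - rook_number N (N - k)%N)).
under eq_bigr => k _ do rewrite polyCB mulrBl.
by rewrite sumrB -Xn_c -Xn_fall_expansion subrr.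
Qed.

End FallingExpansion.

Arguments fall {R} a k.
Arguments rook_number {R} a N m.

Section TilingWeights.
Variables (R : comRingType) (p q : R).

Lemma Fib0 : Fib p q 0 = 0.
Proof. by rewrite /Fib /fib_tilings /= big_nil. Qed.

Lemma sum_cprod_fib_tilings (T : Type) (h : T -> nat) (xs : seq T) :
  \sum_(pl <- cprod [seq fib_tilings (h x) | x <- xs]) pl_weight p q pl =
  \prod_(x <- xs) Fib p q (h x).
Proof.
elim: xs => [|x xs IH] /=; first by rewrite big_seq1 big_nil /pl_weight /= mulr1.
rewrite big_allpairs_dep big_cons /Fib big_distrl /=; apply: eq_bigr => y _.
rewrite -IH big_distrr /=; apply: eq_bigr => r _.
by rewrite /pl_weight /= !exprD mulrACA.
Qed.

Lemma fT_subsets_sum b k : fT p q b k =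
  subsets_sum (size b)
    (fun s => (size s == k)%:R * \prod_(c <- s) Fib p q (nth 0%N b c)).
Proof.
rewrite /fT /subsets_sum big_mkcond; apply: eq_bigr => S _.
by rewrite size_cols; case: eqP => _; rewrite ?mul0r // mul1r sum_cprod_fib_tilings.
Qed.

Lemma rT_rook_number b k :
  rT p q b k = rook_number (fun i => Fib p q (nth 0%N b i)) (size b) k.
Proof.
rewrite /rT /rook_number /subsets_sum big_mkcond; apply: eq_bigr => S _.
rewrite /rook_weight size_cols.
by case: eqP => _; rewrite ?mul0r // mul1r sum_cprod_fib_tilings.
Qed.

Lemma frise_prod n : frise p q n = \prod_(i < n) ('X + (Fib p q i)%:P).
Proof.
case: n => [|n]; first by rewrite big_ord0.
by rewrite big_ord_recl /frise Fib0 addr0 big_add1 /= big_mkord.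
Qed.

Lemma ffall_prod k : ffall p q k = fall (Fib p q) k.
Proof.
case: k => [|k]; first by rewrite /fall big_ord0.
by rewrite /fall big_ord_recl /ffall Fib0 subr0 big_add1 /= big_mkord.
Qed.

End TilingWeights.

Theorem mainTheorem5 (R : comRingType) (p q : R) (n : nat) :
  (forall k : nat, (k <= n)%N -> cf p q n k = fT p q (Bn n) (n - k)) /\
  (forall c : nat -> R,
     ('X^n = \sum_(k < n.+1) (c k)%:P * ffall p q k) <->
     (forall k : nat, (k <= n)%N -> c k = rT p q (Bn n) (n - k))).
Proof.
set a := fun i => Fib p q (nth 0%N (Bn n) i).
have nth_Bn i : (i < n)%N -> nth 0%N (Bn n) i = i by move=> lt_in; rewrite nth_iota.
have ffall_Bn (k : 'I_n.+1) : ffall p q k = fall a k.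
  rewrite ffall_prod; apply: eq_bigr => i _; rewrite /a nth_Bn //.
  by apply: leq_trans (ltn_ord i) _; rewrite -ltnS.
split=> [k kn | c].
  rewrite /cf frise_prod (eq_bigr (fun i : 'I_n => 'X + (a i)%:P)) => [|i _]; last first.
    by rewrite /a nth_Bn.
  by rewrite coef_prod_XaddC // fT_subsets_sum size_iota.
under eq_bigr => k _ do rewrite ffall_Bn.
have rT_Bn k : rT p q (Bn n) k = rook_number a n k by rewrite rT_rook_number size_iota.
by rewrite Xn_fall_coordsP; split=> c_eq k kn; rewrite c_eq // rT_Bn.
Qed.
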